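(* Let $f,g:\mathbb{R}\to\mathbb{R}$ be $\mathcal{C}^2$ functions such that $f''(u)\ge c_0$ and $g''(u)\ge c_0$ for some $c_0>0$ and all $u\in\mathbb{R}$, and $f(u)>g(u)$ for all $u\in\mathbb{R}$. Let $u^-<u^+$ be real numbers (an upward jump) and $\theta^-,\theta^+\in\{0,1\}$, and let $$\lambda=\frac{[\theta^+f(u^+)+(1-\theta^+)g(u^+)]-[\theta^-f(u^-)+(1-\theta^-)g(u^-)]}{u^+-u^-}$$ be the Rankine–Hugoniot speed. Then the Lax admissibility conditions $$\theta^+f'(u^+)+(1-\theta^+)g'(u^+)\;\le\;\lambda\;\le\;\theta^-f'(u^-)+(1-\theta^-)g'(u^-)$$ are violated, i.e. at least one of these two inequalities fails.
   Context: This concerns jumps of weak solutions of the conservation law $u_t+[\theta(u_x)f(u)+(1-\theta(u_x))g(u)]_x=0$, where $\theta(s)=1$ for $s>0$ and $\theta(s)=0$ for $s<0$. A jump connects a left state $(u^-,\theta^-)$ to a right state $(u^+,\theta^+)$, traveling with the Rankine–Hugoniot speed $\lambda$ given in the claim. *)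

From Stdlib Require Import Reals.
From Coquelicot Require Import Coquelicot.
Open Scope R_scope.

Definition C2_with (f df d2f : R -> R) : Prop :=
  (forall x, is_derive f x (df x)) /\
  (forall x, is_derive df x (d2f x)) /\
  (forall x, continuous d2f x).

Definition mixflux (f g : R -> R) (theta u : R) : R :=
  theta * f u + (1 - theta) * g u.

(** Write [h] for the flux [mixflux f g thp] of the right state; like [f] and
    [g] it is strictly convex, and [g <= h <= f]. If the left state sits on the
    lower branch [g], the jump rises from [g] to [h >= g], so the shock speed
    exceeds the slope of the chord of [g] over [[um, up]], which exceeds
    [g'(um)]. If it sits on the upper branch [f], the jump falls from [f] to
    [h <= f], so the shock speed is below the slope of the chord of [h], which
    is below [h'(up)]. *)

From Stdlib Require Import Reals Lra Psatz.
From Coquelicot Require Import Coquelicot.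
Open Scope R_scope.

Lemma Rdiv_le_compat_r a b c : 0 < c -> a <= b -> a / c <= b / c.
Proof.
  intros Hc Hab; unfold Rdiv.
  apply Rmult_le_compat_r; [apply Rlt_le, Rinv_0_lt_compat |]; assumption.
Qed.

Section StrictlyConvex.

Variables F dF d2F : R -> R.
Hypothesis F_derive : forall x, is_derive F x (dF x).
Hypothesis dF_derive : forall x, is_derive dF x (d2F x).
Hypothesis d2F_pos : forall x, 0 < d2F x.

Lemma derive_strict_incr a b : a < b -> dF a < dF b.
Proof.
  intros Hab.
  apply (incr_function dF m_infty p_infty d2F); try easy.
  intros x _ _; apply d2F_pos.
Qed.

Lemma derive_lt_chord_slope a b : a < b -> dF a < (F b - F a) / (b - a).
Proof.
  intros Hab.
  destruct (MVT_cor2 F dF a b Hab) as [c [Hc [Hac _]]].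
  { intros c _; apply is_derive_Reals, F_derive. }
  apply Rlt_div_r; [lra |].
  rewrite Hc.
  pose proof (derive_strict_incr a c Hac).
  nra.
Qed.

Lemma chord_slope_lt_derive a b : a < b -> (F b - F a) / (b - a) < dF b.
Proof.
  intros Hab.
  destruct (MVT_cor2 F dF a b Hab) as [c [Hc [_ Hcb]]].
  { intros c _; apply is_derive_Reals, F_derive. }
  rewrite Hc.
  pose proof (derive_strict_incr c b Hcb).
  replace (dF c * (b - a) / (b - a)) with (dF c) by (field; lra).
  lra.
Qed.

End StrictlyConvex.

Lemma mixflux_0 (f g : R -> R) u : mixflux f g 0 u = g u.
Proof. unfold mixflux; ring. Qed.

Lemma mixflux_1 (f g : R -> R) u : mixflux f g 1 u = f u.
Proof. unfold mixflux; ring. Qed.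

Lemma mixflux_bounds (f g : R -> R) theta u :
  0 <= theta <= 1 -> g u <= f u -> g u <= mixflux f g theta u <= f u.
Proof. unfold mixflux; intros; nra. Qed.

Lemma mixflux_pos (f g : R -> R) theta u :
  0 <= theta <= 1 -> 0 < f u -> 0 < g u -> 0 < mixflux f g theta u.
Proof. unfold mixflux; intros; nra. Qed.

Lemma is_derive_mixflux (f g df dg : R -> R) theta x :
  is_derive f x (df x) -> is_derive g x (dg x) ->
  is_derive (mixflux f g theta) x (mixflux df dg theta x).
Proof.
  intros Hf Hg; unfold mixflux.
  apply (is_derive_plus (fun u => theta * f u) (fun u => (1 - theta) * g u));
    apply is_derive_scal; assumption.
Qed.

Section Jump.

Variables f g df dg d2f d2g : R -> R.
Hypothesis f_derive : forall x, is_derive f x (df x).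
Hypothesis df_derive : forall x, is_derive df x (d2f x).
Hypothesis g_derive : forall x, is_derive g x (dg x).
Hypothesis dg_derive : forall x, is_derive dg x (d2g x).
Hypothesis d2f_pos : forall x, 0 < d2f x.
Hypothesis d2g_pos : forall x, 0 < d2g x.
Hypothesis g_le_f : forall u, g u <= f u.

Variables um up theta : R.
Hypothesis um_lt_up : um < up.
Hypothesis theta_01 : 0 <= theta <= 1.

Lemma jump_from_lower_branch_speed_gt :
  dg um < (mixflux f g theta up - g um) / (up - um).
Proof.
  apply Rlt_le_trans with ((g up - g um) / (up - um)).
  - exact (derive_lt_chord_slope g dg d2g g_derive dg_derive d2g_pos um up um_lt_up).
  - apply Rdiv_le_compat_r; [lra |].
    pose proof (mixflux_bounds f g theta up theta_01 (g_le_f up)); lra.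
Qed.

Lemma jump_from_upper_branch_speed_lt :
  (mixflux f g theta up - f um) / (up - um) < mixflux df dg theta up.
Proof.
  apply Rle_lt_trans with
    ((mixflux f g theta up - mixflux f g theta um) / (up - um)).
  - apply Rdiv_le_compat_r; [lra |].
    pose proof (mixflux_bounds f g theta um theta_01 (g_le_f um)); lra.
  - apply (chord_slope_lt_derive _ _ (mixflux d2f d2g theta)); [| | | exact um_lt_up].
    + intro x; apply is_derive_mixflux; auto.
    + intro x; apply is_derive_mixflux; auto.
    + intro x; apply mixflux_pos; auto.
Qed.

End Jump.

Theorem lemma2p1 (f g df dg d2f d2g : R -> R) (c0 : R)
  (Hf : C2_with f df d2f) (Hg : C2_with g dg d2g)
  (Hc0 : 0 < c0)
  (Hf2 : forall u, d2f u >= c0) (Hg2 : forall u, d2g u >= c0)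
  (Hfg : forall u, f u > g u)
  (um up thm thp : R) (Hu : um < up)
  (Hthm : thm = 0 \/ thm = 1) (Hthp : thp = 0 \/ thp = 1) :
  let lambda := (mixflux f g thp up - mixflux f g thm um) / (up - um) in
  ~ (mixflux df dg thp up <= lambda /\ lambda <= mixflux df dg thm um).
Proof.
  intros lambda [Hright Hleft].
  destruct Hf as [Hdf [Hd2f _]], Hg as [Hdg [Hd2g _]].
  assert (Hd2f_pos : forall x, 0 < d2f x) by (intro x; specialize (Hf2 x); lra).
  assert (Hd2g_pos : forall x, 0 < d2g x) by (intro x; specialize (Hg2 x); lra).
  assert (Hg_le_f : forall u, g u <= f u) by (intro u; apply Rlt_le, Hfg).
  assert (Hthp01 : 0 <= thp <= 1) by (destruct Hthp; lra).
  destruct Hthm as [-> | ->]; unfold lambda in *.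
  - rewrite (mixflux_0 f g), (mixflux_0 df dg) in Hleft.
    pose proof (jump_from_lower_branch_speed_gt f g dg d2g Hdg Hd2g Hd2g_pos
                  Hg_le_f um up thp Hu Hthp01).
    lra.
  - rewrite (mixflux_1 f g) in Hright.
    pose proof (jump_from_upper_branch_speed_lt f g df dg d2f d2g Hdf Hd2f Hdg Hd2g
                  Hd2f_pos Hd2g_pos Hg_le_f um up thp Hu Hthp01).
    lra.
Qed.
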